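(* Let $(X,\rho,\mu)$ be a $K$-doubling metric measure space and $x\in X$. The following are equivalent: (i) $x$ is an isolated point of $X$ for the metric topology of $\rho$; (ii) $x$ is an isolated point of $X$ for the $\mu$-topology; (iii) $\mu(\{x\})>0$.
   Context: A $K$-doubling metric measure space ($K>0$) is a triple $(X,\rho,\mu)$ where $(X,\rho)$ is a complete separable metric space and $\mu$ is a Borel-regular outer measure on $X$ with $0<\mu(B_{2r}(x))\le K\mu(B_r(x))<+\infty$ for all $x\in X$, $r>0$. A point $x\in E\subseteq X$ is a $\mu$-interior point of $E$ if there is a Borel set $B\subseteq E$ with $\lim_{r\to0^+}\mu(B_r(x)\setminus B)/\mu(B_r(x))=0$; in that case $E$ is called a $\mu$-neighborhood of $x$. The $\mu$-topology is the topology on $X$ whose open sets are the sets that are $\mu$-neighborhoods of each of their points. A point $x$ is $\mu$-isolated if $\{x\}$ is a $\mu$-neighborhood of $x$. *)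

From HB Require Import structures.
From mathcomp Require Import all_boot all_order all_algebra.
From mathcomp Require Import all_classical all_reals all_analysis.
Set Implicit Arguments. Unset Strict Implicit. Unset Printing Implicit Defensive.
Import Order.TTheory GRing.Theory Num.Theory.
Import numFieldNormedType.Exports.
Local Open Scope classical_set_scope.
Local Open Scope ring_scope.

Section MMS.
Variables (R : realType) (X : Type).

Definition is_metric (rho : X -> X -> R) : Prop :=
  [/\ forall x y, 0 <= rho x y,
      forall x y, rho x y = 0 <-> x = y,
      forall x y, rho x y = rho y x &
      forall x y z, rho x z <= rho x y + rho y z].

Definition mball (rho : X -> X -> R) (x : X) (r : R) : set X :=
  [set y | rho x y < r].

Definition metric_complete (rho : X -> X -> R) : Prop :=
  forall u : nat -> X,
    (forall e : R, 0 < e -> exists N : nat, forall m n : nat,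
        (N <= m)%N -> (N <= n)%N -> rho (u m) (u n) < e) ->
    exists l : X, forall e : R, 0 < e -> exists N : nat, forall n : nat,
        (N <= n)%N -> rho (u n) l < e.

Definition metric_separable (rho : X -> X -> R) : Prop :=
  exists D : set X, countable D /\
    forall x (e : R), 0 < e -> exists2 d, D d & rho x d < e.

Definition metric_open (rho : X -> X -> R) (U : set X) : Prop :=
  forall x, U x -> exists2 r : R, 0 < r & mball rho x r `<=` U.

Definition metric_borel (rho : X -> X -> R) (B : set X) : Prop :=
  <<s metric_open rho >> B.

Definition borel_regular (rho : X -> X -> R)
  (mu : {outer_measure set X -> \bar R}) : Prop :=
  (forall B, metric_borel rho B -> mu.-caratheodory B) /\
  (forall A : set X, exists B, [/\ metric_borel rho B, A `<=` B & mu B = mu A]).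

Definition doubling_mms (rho : X -> X -> R)
  (mu : {outer_measure set X -> \bar R}) (K : R) : Prop :=
  [/\ 0 < K, is_metric rho, metric_complete rho, metric_separable rho &
      borel_regular rho mu] /\
      forall x (r : R), 0 < r ->
        [/\ (0 < mu (mball rho x r))%E,
            (mu (mball rho x (2 * r)) <= K%:E * mu (mball rho x r))%E &
            (mu (mball rho x r) < +oo)%E].

Definition mu_nbhd (rho : X -> X -> R) (mu : {outer_measure set X -> \bar R})
  (x : X) (E : set X) : Prop :=
  E x /\ exists B : set X, [/\ metric_borel rho B, B `<=` E &
    (fun r : R => fine (mu (mball rho x r `\` B)) / fine (mu (mball rho x r)))
      @ 0^'+ --> 0].

Definition mu_open (rho : X -> X -> R) (mu : {outer_measure set X -> \bar R})
  (E : set X) : Prop :=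
  forall x, E x -> mu_nbhd rho mu x E.

End MMS.

From HB Require Import structures.
From mathcomp Require Import all_boot all_order all_algebra.
From mathcomp Require Import all_classical all_reals all_analysis.
From mathcomp Require Import lra.
Set Implicit Arguments.
Unset Strict Implicit.
Unset Printing Implicit Defensive.
Import Order.TTheory GRing.Theory Num.Theory numFieldNormedType.Exports.
Local Open Scope classical_set_scope.
Local Open Scope ring_scope.

(* If x is isolated, {x} contains a ball and has positive measure.
   Continuity from above along the punctured balls B_{1/n}(x) \ {x}, whose
   intersection is empty, makes mu(B_r(x) \ {x}) tend to 0 as r -> 0+.
   Hence if mu{x} > 0, the Borel set {x} itself has density 1 at x, so
   {x} is mu-open; and x is isolated, since a point y <> x at distance
   delta < r/2 would give, by doubling twice around y,
   mu{x} <= mu B_{2 delta}(y) <= K^2 mu B_{delta/2}(y) <= K^2 mu(B_r(x) \ {x}),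
   which tends to 0.
   Conversely, if mu{x} = 0, every Borel B contained in {x} is null, so
   mu(B_r(x) \ B) / mu(B_r(x)) is constantly 1 and cannot tend to 0. *)

(* The point [t0] only equips [T] with the pointed structure that the
   measurable space of Caratheodory-measurable sets requires. *)
Lemma caratheodory_nonincreasing_cvg (R : realType) (T : Type) (t0 : T)
  (mu : {outer_measure set T -> \bar R}) (A : (set T)^nat) :
  (forall n, mu.-caratheodory (A n)) -> nonincreasing_seq A ->
  (mu (A 0%N) < +oo)%E -> mu \o A @ \oo --> mu (\bigcap_n A n).
Proof.
move=> cA nA A0.
pose pT : pointedType :=
  HB.pack T (gen_eqMixin T) (gen_choiceMixin T) (isPointed.Build T t0).
pose nu : {outer_measure set pT -> \bar R} := mu.
have cA' : forall n, nu.-cara.-measurable (A n) by [].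
exact: (@nonincreasing_cvg_mu _ (caratheodory_type nu) R nu A
  A0 cA' (bigcapT_measurable cA') nA).
Qed.

Lemma outer_measureD_null (R : realType) (T : Type)
  (mu : {outer_measure set T -> \bar R}) (A N : set T) :
  mu N = 0%E -> mu (A `\` N) = mu A.
Proof.
move=> muN0; apply/eqP; rewrite eq_le le_outer_measure ?subDsetl //=.
apply: (@le_trans _ _ (mu ((A `\` N) `|` N))).
  apply: le_outer_measure => t At.
  by have [Nt|nNt] := pselect (N t); [right|left].
by apply: le_trans (outer_measureU2 mu _ N) _; rewrite muN0 adde0.
Qed.

Section metric.
Variables (R : realType) (X : Type) (rho : X -> X -> R).
Hypothesis rho_metric : is_metric rho.

Lemma metric_gt0 x y : x <> y -> 0 < rho x y.
Proof.
case: rho_metric => rho_ge0 rho_eq0 _ _ xy.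
by rewrite lt_neqAle rho_ge0 andbT eq_sym; apply/eqP => /rho_eq0.
Qed.

Lemma metric_sym x y : rho x y = rho y x.
Proof. by case: rho_metric. Qed.

Lemma metric_triangle x y z : rho x z <= rho x y + rho y z.
Proof. by case: rho_metric. Qed.

Lemma mball_center x r : 0 < r -> mball rho x r x.
Proof.
by case: rho_metric => _ rho_eq0 _ _ r0; rewrite /mball /= (rho_eq0 x x).2.
Qed.

Lemma subset_mball x r s : r <= s -> mball rho x r `<=` mball rho x s.
Proof. by move=> rs y; rewrite /mball /= => /lt_le_trans; apply. Qed.

Lemma metric_open_mball x r : metric_open rho (mball rho x r).
Proof.
move=> y; rewrite /mball /= => xy.
exists (r - rho x y); first by rewrite subr_gt0.
by move=> z; rewrite /mball /= => yz; have := metric_triangle x y z; lra.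
Qed.

Lemma metric_borel_open U : metric_open rho U -> metric_borel rho U.
Proof. exact: sub_gen_smallest. Qed.

Lemma metric_borel_set1 x : metric_borel rho [set x].
Proof.
have open_setC1 : metric_open rho (~` [set x]).
  move=> y /= yx; exists (rho y x); first exact: metric_gt0.
  by move=> z; rewrite /mball /= => + zx; rewrite zx ltxx.
have [_ borelC _] := smallest_sigma_algebra setT (metric_open rho).
rewrite -[[set x]]setCK -setTD.
by apply: borelC; apply: metric_borel_open.
Qed.

Lemma bigcap_punctured_mball x :
  \bigcap_n (mball rho x n.+1%:R^-1 `\` [set x]) = set0.
Proof.
apply/seteqP; split => // y punctured.
have [_ /nesym/metric_gt0 xy0] := punctured 0%N I.
have [n /[!add0r] n_lt] := ltr_add_invr xy0.
by have [/= /(lt_trans n_lt)] := punctured n I; rewrite ltxx.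
Qed.

Lemma punctured_mball_subset x y d : x <> y -> rho x y < d / 2 ->
  mball rho y (rho x y / 2) `<=` mball rho x d `\` [set x].
Proof.
move=> /metric_gt0 xy0 xyd z; rewrite /mball /= => yz; split.
  by rewrite /mball /=; have := metric_triangle x y z; lra.
by move=> zx; rewrite zx metric_sym in yz; lra.
Qed.

End metric.

Section doubling_measure.
Variables (R : realType) (X : Type) (rho : X -> X -> R).
Variables (mu : {outer_measure set X -> \bar R}) (K : R).
Hypotheses (rho_metric : is_metric rho)
  (borel_caratheodory : forall B, metric_borel rho B -> mu.-caratheodory B)
  (mball_gt0 : forall x r, 0 < r -> (0 < mu (mball rho x r))%E)
  (mball_fin : forall x r, 0 < r -> (mu (mball rho x r) < +oo)%E)
  (K_gt0 : 0 < K)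
  (mball_doubling : forall x r, 0 < r ->
    (mu (mball rho x (2 * r)) <= K%:E * mu (mball rho x r))%E).

Lemma mu_punctured_mball_small x e : 0 < e -> exists2 d, 0 < d &
  forall r, r <= d -> (mu (mball rho x r `\` [set x]) < e%:E)%E.
Proof.
move=> e0; pose A n := mball rho x n.+1%:R^-1 `\` [set x].
have cA n : mu.-caratheodory (A n).
  apply: caratheodory_measurable_setD; apply: borel_caratheodory.
    by apply: metric_borel_open; apply: metric_open_mball.
  exact: metric_borel_set1.
have nA : nonincreasing_seq A.
  move=> m n mn; apply/subsetPset; apply: setSD; apply: subset_mball.
  by rewrite lef_pV2 ?posrE // ler_nat ltnS.
have A0_fin : (mu (A 0%N) < +oo)%E.
  apply: (@le_lt_trans _ _ (mu (mball rho x 1))); last exact: mball_fin.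
  apply: le_outer_measure.
  by rewrite /A invr1; apply: subDsetl.
have := caratheodory_nonincreasing_cvg x cA nA A0_fin.
rewrite bigcap_punctured_mball // outer_measure0.
have e0' : (0 < e%:E)%E by rewrite lte_fin.
move=> /(_ _ (open_ereal_lt' e0')) [N _ /(_ N (leqnn N)) AN].
exists N.+1%:R^-1 => // r rN; apply: le_lt_trans AN.
by apply: le_outer_measure; apply: setSD; apply: subset_mball.
Qed.

Lemma metric_open_set1_mu_gt0 x : metric_open rho [set x] -> (0 < mu [set x])%E.
Proof.
move=> /(_ x erefl) [r r0 ball_x].
exact: lt_le_trans (mball_gt0 x r0) (le_outer_measure mu _ _ ball_x).
Qed.

Lemma mu_set1_fin x : (mu [set x] < +oo)%E.
Proof.
apply: le_lt_trans (mball_fin x ltr01); apply: le_outer_measure => _ ->.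
exact: mball_center.
Qed.

Lemma mu_set1_gt0_mu_open x : (0 < mu [set x])%E -> mu_open rho mu [set x].
Proof.
move=> mux_gt0 _ ->; split => //; exists [set x].
split => //; first exact: metric_borel_set1.
have m_gt0 : 0 < fine (mu [set x]) by rewrite fine_gt0 // mux_gt0 mu_set1_fin.
apply/cvgrPdist_lt => e e0.
have [d d0 small] := mu_punctured_mball_small x (mulr_gt0 e0 m_gt0).
near=> r.
have r0 : 0 < r by near: r; exact: nbhs_right_gt.
have rd : r <= d by near: r; exact: nbhs_right_le.
have mu_fin_num A : (mu A < +oo)%E -> mu A \is a fin_num.
  by move=> A_fin; rewrite ge0_fin_numE ?outer_measure_ge0.
have mux_le_ball : (mu [set x] <= mu (mball rho x r))%E.
  by apply: le_outer_measure => _ ->; exact: mball_center.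
have punctured_lt :
    fine (mu (mball rho x r `\` [set x])) < e * fine (mu [set x]).
  have p_lt := small r rd.
  by rewrite -lte_fin fineK ?mu_fin_num // (lt_trans p_lt) ?ltry.
have m_le : fine (mu [set x]) <= fine (mu (mball rho x r)).
  by rewrite fine_le ?mu_fin_num ?mball_fin ?mu_set1_fin.
have b_gt0 : 0 < fine (mu (mball rho x r)) := lt_le_trans m_gt0 m_le.
rewrite sub0r normrN ger0_norm ?divr_ge0 ?fine_ge0 ?outer_measure_ge0 ?ltW //.
rewrite ltr_pdivrMr //; apply: lt_le_trans punctured_lt _.
by rewrite ler_pM2l.
Unshelve. all: by end_near.
Qed.

Lemma mu_open_set1_mu_gt0 x : mu_open rho mu [set x] -> (0 < mu [set x])%E.
Proof.
move=> /(_ x erefl) [_ [B [_ Bx ratio_cvg0]]].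
rewrite lt_neqAle outer_measure_ge0 andbT eq_sym; apply/negP => /eqP mux0.
have muB0 : mu B = 0%E.
  by apply/eqP; rewrite eq_le outer_measure_ge0 -mux0 le_outer_measure.
have ratio_cvg1 : fine (mu (mball rho x r `\` B)) / fine (mu (mball rho x r))
    @[r --> 0^'+] --> (1 : R).
  apply: cvg_near_cst; near=> r.
  have r0 : 0 < r by near: r; exact: nbhs_right_gt.
  rewrite outer_measureD_null // divff // gt_eqF // fine_gt0 //.
  by rewrite mball_gt0 ?mball_fin.
have /eqP := norm_cvg_unique
  (FF := fmap_proper_filter _ (at_right_proper_filter 0)) ratio_cvg0 ratio_cvg1.
by rewrite eq_sym oner_eq0.
Unshelve. all: by end_near.
Qed.

Lemma mball_quadrupling y s : 0 < s ->
  (mu (mball rho y (2 * (2 * s))) <= (K * K)%:E * mu (mball rho y s))%E.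
Proof.
move=> s0; rewrite EFinM -muleA.
apply: le_trans (mball_doubling y _) _; first by rewrite mulr_gt0.
by apply: lee_wpmul2l; [rewrite lee_fin ltW | exact: mball_doubling].
Qed.

Lemma mu_set1_le_punctured_mball x d : ~ metric_open rho [set x] -> 0 < d ->
  (mu [set x] <= (K * K)%:E * mu (mball rho x d `\` [set x]))%E.
Proof.
move=> not_open d0.
have [y xy xyd] : exists2 y, x <> y & rho x y < d / 2.
  apply: contrapT => isolated; apply: not_open => _ ->.
  exists (d / 2); first by rewrite divr_gt0.
  by move=> z xz; apply: contrapT => zx; apply: isolated; exists z => // /esym.
have xy0 := metric_gt0 rho_metric xy.
apply: (@le_trans _ _ (mu (mball rho y (2 * (2 * (rho x y / 2)))))).
  by apply: le_outer_measure => _ ->; rewrite /mball /= metric_sym //; lra.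
apply: le_trans (mball_quadrupling y _) _; first by rewrite divr_gt0.
apply: lee_wpmul2l; first by rewrite lee_fin mulr_ge0 // ltW.
by apply: le_outer_measure; exact: punctured_mball_subset.
Qed.

Lemma mu_set1_gt0_metric_open x : (0 < mu [set x])%E -> metric_open rho [set x].
Proof.
move=> mux_gt0; apply: contrapT => not_open.
suff : (mu [set x] <= 0)%E by rewrite leNgt mux_gt0.
apply/lee_addgt0Pr => e e0; rewrite add0e.
have KK_gt0 : 0 < K * K by rewrite mulr_gt0.
have [d d0 small] := mu_punctured_mball_small x (divr_gt0 e0 KK_gt0).
apply: le_trans (mu_set1_le_punctured_mball not_open d0) _.
have -> : e%:E = ((K * K)%:E * (e / (K * K))%:E)%E.
  by rewrite -EFinM mulrC divfK // lt0r_neq0.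
apply: lee_wpmul2l; first by rewrite lee_fin ltW.
exact/ltW/small.
Qed.

End doubling_measure.

Theorem proposition2p2 (R : realType) (X : Type) (rho : X -> X -> R)
  (mu : {outer_measure set X -> \bar R}) (K : R)
  (hX : doubling_mms rho mu K) (x : X) :
  (metric_open rho [set x] <-> mu_open rho mu [set x]) /\
  (mu_open rho mu [set x] <-> (0 < mu [set x])%E).
Proof.
case: hX => [[K_gt0 rho_metric _ _ [borel_caratheodory _]] mball_props].
have mball_gt0 y r : 0 < r -> (0 < mu (mball rho y r))%E.
  by move=> r0; case: (mball_props y r r0).
have mball_fin y r : 0 < r -> (mu (mball rho y r) < +oo)%E.
  by move=> r0; case: (mball_props y r r0).
have mball_doubling y r : 0 < r ->
    (mu (mball rho y (2 * r)) <= K%:E * mu (mball rho y r))%E.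
  by move=> r0; case: (mball_props y r r0).
have open_gt0 := metric_open_set1_mu_gt0 mball_gt0 (x := x).
have gt0_mu_open :=
  mu_set1_gt0_mu_open rho_metric borel_caratheodory mball_fin (x := x).
have mu_open_gt0 := mu_open_set1_mu_gt0 mball_gt0 mball_fin (x := x).
have gt0_open := mu_set1_gt0_metric_open rho_metric borel_caratheodory
  mball_fin K_gt0 mball_doubling (x := x).
split; split.
- by move/open_gt0/gt0_mu_open.
- by move/mu_open_gt0/gt0_open.
- exact: mu_open_gt0.
- exact: gt0_mu_open.
Qed.
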